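(* Let $\mathcal E$ be an exchangeability system for a noncommutative probability space $(\mathcal A,\phi)$, let $(X_{i,j})_{i\in[m],\,j\in[n_i]}\subseteq\mathcal A$, $n=n_1+\dots+n_m$, and $\pi\in\Pi_m$. Then $$K_\pi\Big(\prod_{j=1}^{n_1}X_{1,j},\dots,\prod_{j=1}^{n_m}X_{m,j}\Big)=\sum_{\substack{\sigma\in\Pi_n\\ \sigma\vee\tilde{\hat0}_m=\tilde\pi}}K_\sigma(X_{1,1},X_{1,2},\dots,X_{m,n_m}),$$ where products are taken in increasing order of $j$.
   Context: A noncommutative probability space is a pair $(\mathcal A,\phi)$ of a complex unital algebra $\mathcal A$ and a unital linear functional $\phi$. An exchangeability system $\mathcal E$ for $(\mathcal A,\phi)$ consists of a noncommutative probability space $(\mathcal U,\tilde\phi)$ and a family $(\iota_k)_{k\in\mathbb N}$ of embeddings (injective unital algebra homomorphisms) $\iota_k:\mathcal A\to\mathcal A_k\subseteq\mathcal U$ with $\tilde\phi\circ\iota_k=\phi$; write $X^{(k)}=\iota_k(X)$. It is required that for all $X_1,\dots,X_n\in\mathcal A$, indices $i_1,\dots,i_n\in\mathbb N$ and bijections $\sigma$ of $\mathbb N$, $\tilde\phi(X_1^{(i_1)}\cdots X_n^{(i_n)})=\tilde\phi(X_1^{(\sigma(i_1))}\cdots X_n^{(\sigma(i_n))})$; this value depends only on the kernel of $j\mapsto i_j$ and for a partition $\pi$ is denoted $\phi_\pi(X_1,\dots,X_n)$. $\Pi_n$ is the lattice of set partitions of $[n]$ under refinement with Möbius function $\mu$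 and join $\vee$; $K_\pi=\sum_{\sigma\le\pi}\phi_\sigma\,\mu(\sigma,\pi)$. Identify $[n]$ with $\{(i,j):i\in[m],j\in[n_i]\}$ in lexicographic order. Each $\pi\in\Pi_m$ induces $\tilde\pi\in\Pi_n$ with blocks $\{(i,j):i\in B,j\in[n_i]\}$ for $B\in\pi$; $\hat0_m$ is the partition of $[m]$ into singletons. *)

From HB Require Import structures.
From mathcomp Require Import all_boot all_order all_algebra.
From mathcomp Require Import complex.
From mathcomp Require Import reals.

Set Implicit Arguments.
Unset Strict Implicit.
Unset Printing Implicit Defensive.

Import Order.TTheory GRing.Theory Num.Theory.
Local Open Scope ring_scope.

Section ExchDefs.

Variable C : fieldType.

Record exch_system (A : algType C) (phi : A -> C) := ExchSystem {
  exU : algType C;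
  exphi : exU -> C;
  exphi_lin : forall (a : C) (x y : exU), exphi (a *: x + y) = a * exphi x + exphi y;
  exphi1 : exphi 1 = 1;
  exiota : nat -> {lrmorphism A -> exU};
  exiota_inj : forall k, injective (exiota k);
  exiota_phi : forall k (x : A), exphi (exiota k x) = phi x;
  exch_inv : forall (n : nat) (X : 'I_n -> A) (idx : 'I_n -> nat) (s : nat -> nat),
      bijective s ->
      exphi (\prod_(j < n) exiota (idx j) (X j))
      = exphi (\prod_(j < n) exiota (s (idx j)) (X j))
}.

Definition is_part (n : nat) (s : {set {set 'I_n}}) : bool := partition s [set: 'I_n].

Definition refines (n : nat) (s p : {set {set 'I_n}}) : bool :=
  [forall B in s, [exists B' in p, B \subset B']].

Definition is_join (n : nat) (a b c : {set {set 'I_n}}) : bool :=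
  [&& is_part c, refines a c, refines b c &
      [forall d : {set {set 'I_n}},
         is_part d ==> refines a d ==> refines b d ==> refines c d]].

(* Moebius function of the poset Pi_n, by the usual recursion
   mu(s,s) = 1, mu(s,p) = - sum_{s <= z < p} mu(s,z) for s < p, 0 otherwise;
   the recursion is run with enough fuel (the depth is bounded by #|Pi_n|). *)
Fixpoint mob_rec (n : nat) (k : nat) (s p : {set {set 'I_n}}) : C :=
  match k with
  | 0 => 0
  | k'.+1 =>
      if s == p then 1
      else if refines s p then
        - \sum_(z : {set {set 'I_n}} |
                  [&& is_part z, refines s z, refines z p & z != p])
            mob_rec k' s z
      else 0
  end.

Definition mobius (n : nat) (s p : {set {set 'I_n}}) : C :=
  mob_rec (#|{: {set {set 'I_n}}}|).+1 s p.

Variables (A : algType C) (phi : A -> C) (E : exch_system phi).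

(* phi_s(X_1,...,X_n): evaluate with any index assignment whose kernel is s;
   we take j |-> (code of the block of s containing j). *)
Definition phi_part (n : nat) (s : {set {set 'I_n}}) (X : 'I_n -> A) : C :=
  @exphi _ _ E (\prod_(j < n) @exiota _ _ E (pickle (pblock s j)) (X j)).

Definition Kpart (n : nat) (p : {set {set 'I_n}}) (X : 'I_n -> A) : C :=
  \sum_(s : {set {set 'I_n}} | is_part s && refines s p) phi_part s X * mobius s p.

End ExchDefs.

(* Lexicographic identification of [n], n = n_1 + ... + n_m, with pairs (i,j). *)
Section Lex.

Variables (m : nat) (n_ : 'I_m -> nat).

(* the first coordinate i of the k-th pair, as a nat *)
Definition owners : seq nat := flatten [seq nseq (n_ i) (val i) | i <- enum 'I_m].

Definition tilde (pi : {set {set 'I_m}}) : {set {set 'I_(\sum_(i < m) n_ i)}} :=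
  [set [set k : 'I_(\sum_(i < m) n_ i) | [exists i : 'I_m, (i \in B) && (nth 0%N owners k == val i)]]
  | B : {set 'I_m} in pi].

Definition zero_part : {set {set 'I_m}} := [set [set i] | i : 'I_m].

Definition flatX (T : zmodType) (X : forall i : 'I_m, 'I_(n_ i) -> T)
  : 'I_(\sum_(i < m) n_ i) -> T :=
  fun k => nth 0 (flatten [seq [seq X i j | j <- enum 'I_(n_ i)] | i <- enum 'I_m]) k.

End Lex.

(* Let o : [n] -> [m] send (i, j) to i, so that pi~ is the preimage partition of pi
   under o.  Pushing a partition s of [n] forward along o (taking the partition of [m]
   generated by the images of the blocks of s) is left adjoint to taking preimages;
   hence s \/ 0~ = pi~ exactly when the push-forward of s is pi.  For any partition p
   of [m], grouping the s <= p~ by their push-forward and using the moment-cumulant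
   relation phi_t = sum_{s <= t} K_s turns
     sum_{p' <= p} sum_{push s = p'} K_s(X_11, ..., X_mn_m)
   into phi_{p~}(X_11, ..., X_mn_m), which equals phi_p(prod_j X_1j, ..., prod_j X_mj)
   because, by exchangeability, phi of a product depends only on the kernel of the
   index map.  Moebius inversion in Pi_m then identifies sum_{push s = pi} K_s with K_pi. *)

From HB Require Import structures.
From mathcomp Require Import all_boot all_order all_algebra.
From mathcomp Require Import complex reals.
Import GRing.Theory.
Local Open Scope ring_scope.
Set Implicit Arguments.
Unset Strict Implicit.
Unset Printing Implicit Defensive.

Section PartitionLattice.
Variable n : nat.
Local Notation PT := {set {set 'I_n}}.

Lemma refines_refl (s : PT) : refines s s.
Proof. by apply/forall_inP => B HB; apply/exists_inP; exists B. Qed.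

Lemma refines_trans (a b c : PT) : refines a b -> refines b c -> refines a c.
Proof.
move=> /forall_inP ab /forall_inP bc; apply/forall_inP => B /ab /exists_inP [B' /bc].
case/exists_inP=> B'' HB'' sB'B'' sBB'.
by apply/exists_inP; exists B''; rewrite ?(subset_trans sBB').
Qed.

Lemma is_part_cover (s : PT) x : is_part s -> x \in cover s.
Proof. by case/and3P => /eqP -> _ _; rewrite inE. Qed.

Lemma is_part_trivIset (s : PT) : is_part s -> trivIset s.
Proof. by case/and3P. Qed.

Lemma pblock_refl (s : PT) x : is_part s -> x \in pblock s x.
Proof. by move=> Ps; rewrite mem_pblock is_part_cover. Qed.

Lemma pblock_sym (s : PT) x y : is_part s -> y \in pblock s x -> x \in pblock s y.
Proof.
by move=> Ps yx; rewrite (same_pblock (is_part_trivIset Ps) yx) pblock_refl.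
Qed.

Lemma pblock_trans (s : PT) x y z : is_part s ->
  y \in pblock s x -> z \in pblock s y -> z \in pblock s x.
Proof. by move=> Ps yx; rewrite (same_pblock (is_part_trivIset Ps) yx). Qed.

Lemma refinesP (a b : PT) : is_part a -> is_part b ->
  reflect (forall x y, y \in pblock a x -> y \in pblock b x) (refines a b).
Proof.
move=> Pa Pb; apply: (iffP forall_inP) => [ab x y yx | ab B HB].
  have /exists_inP [B' HB' sB] := ab _ (pblock_mem (is_part_cover x Pa)).
  have xB' : x \in B' by apply: (subsetP sB); rewrite pblock_refl.
  by rewrite (def_pblock (is_part_trivIset Pb) HB' xB'); apply: (subsetP sB).
have /set0Pn [x xB] : B != set0 by apply: (partition_neq0 Pa).
apply/exists_inP; exists (pblock b x); first exact: pblock_mem (is_part_cover x Pb).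
by apply/subsetP => y yB; apply: ab; rewrite (def_pblock (is_part_trivIset Pa) HB xB).
Qed.

Lemma refines_antisym (a b : PT) : is_part a -> is_part b ->
  refines a b -> refines b a -> a = b.
Proof.
move=> Pa Pb /(refinesP Pa Pb) ab /(refinesP Pb Pa) ba.
have eq_pblock x : pblock a x = pblock b x.
  by apply/setP => y; apply/idP/idP => [/ab|/ba].
have sub (c d : PT) : is_part c -> is_part d -> (forall x, pblock c x = pblock d x) ->
    c \subset d.
  move=> Pc Pd cd; apply/subsetP => B HB.
  have /set0Pn [x xB] : B != set0 by apply: (partition_neq0 Pc).
  by rewrite -(def_pblock (is_part_trivIset Pc) HB xB) cd pblock_mem ?is_part_cover.
by apply/eqP; rewrite eqEsubset !sub.
Qed.

Definition downset (p : PT) : {set PT} := [set z | is_part z && refines z p].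

Lemma card_downset_lt (z p : PT) : is_part z -> is_part p ->
  refines z p -> z != p -> (#|downset z| < #|downset p|)%N.
Proof.
move=> Pz Pp zp nzp; apply: proper_card; rewrite properE; apply/andP; split.
  by apply/subsetP => y; rewrite !inE => /andP [-> /refines_trans ->].
apply/subsetPn; exists p; first by rewrite inE Pp refines_refl.
by rewrite inE Pp /=; apply: contra nzp => pz; rewrite (refines_antisym Pz Pp zp pz).
Qed.

Lemma zero_part_is_part : is_part (zero_part n).
Proof.
apply/and3P; split.
- rewrite eqEsubset subsetT /=; apply/subsetP => i _; apply/bigcupP.
  by exists [set i]; rewrite ?set11 // imset_f.
- apply/trivIsetP => _ _ /imsetP [i _ ->] /imsetP [j _ ->] ne.
  by rewrite disjoints1 inE; apply: contra ne => /eqP ->.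
- by apply/imsetP => [[i _ /setP /(_ i)]]; rewrite !inE eqxx.
Qed.

Lemma pblock_zero_part i : pblock (zero_part n) i = [set i].
Proof.
by apply: def_pblock; rewrite ?set11 ?imset_f ?is_part_trivIset ?zero_part_is_part.
Qed.

Lemma zero_part_refines (s : PT) : is_part s -> refines (zero_part n) s.
Proof.
move=> Ps; apply/(refinesP zero_part_is_part Ps) => x y.
by rewrite pblock_zero_part inE => /eqP ->; apply: pblock_refl.
Qed.

Section Mobius.
Variable C : fieldType.

Lemma mob_rec_fuel k k' (s p : PT) : is_part p ->
  (#|downset p| < k)%N -> (#|downset p| < k')%N -> mob_rec C k s p = mob_rec C k' s p.
Proof.
elim: k k' p => [|k IH] [|k'] p Pp //= ltk ltk'.
case: eqP => // _; case: ifP => // _; congr (- _).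
apply: eq_bigr => z /and4P [Pz sz zp nzp].
have lt_zp := card_downset_lt Pz Pp zp nzp.
by apply: IH => //; apply: leq_trans lt_zp _; rewrite -ltnS.
Qed.

Lemma mobius_rec (s p : PT) : is_part p -> s != p -> refines s p ->
  mobius C s p = - \sum_(z : PT | [&& is_part z, refines s z, refines z p & z != p])
                     mobius C s z.
Proof.
move=> Pp nsp sp; rewrite {1}/mobius /= (negbTE nsp) sp; congr (- _).
apply: eq_bigr => z /and4P [Pz sz zp nzp].
have ltz : (#|downset z| < #|{: PT}|)%N.
  exact: leq_trans (card_downset_lt Pz Pp zp nzp) (max_card _).
by apply: mob_rec_fuel; rewrite // ?ltnS ?ltz ?(ltnW ltz).
Qed.

Lemma mobius_refl (s : PT) : mobius C s s = 1.
Proof. by rewrite /mobius /= eqxx. Qed.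

Lemma sum_mobius_interval (s p : PT) : is_part s -> is_part p -> refines s p ->
  \sum_(z : PT | [&& is_part z, refines s z & refines z p]) mobius C s z = (s == p)%:R.
Proof.
move=> Ps Pp sp; have [<-|nsp] := eqVneq s p.
  rewrite (big_pred1 s) ?mobius_refl // => z; apply/and3P/eqP => [[Pz sz zs]|->].
    exact: refines_antisym.
  by rewrite Ps refines_refl.
rewrite (bigD1 p) /=; last by rewrite Pp sp refines_refl.
rewrite mobius_rec // addrC (eq_bigl (fun z => [&& is_part z, refines s z, refines z p & z != p])).
  by rewrite subrr.
by move=> z; rewrite -!andbA.
Qed.

Lemma sum_mobius_transform (F : PT -> C) (p : PT) : is_part p ->
  \sum_(r : PT | is_part r && refines r p)
     \sum_(s : PT | is_part s && refines s r) F s * mobius C s r = F p.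
Proof.
move=> Pp; rewrite (exchange_big_dep (fun s => is_part s && refines s p)) /=; last first.
  by move=> r s /andP [_ rp] /andP [Ps sr]; rewrite Ps (refines_trans sr rp).
have inner s : is_part s -> refines s p ->
    \sum_(r : PT | is_part r && refines r p && (is_part s && refines s r)) F s * mobius C s r
    = F s * (s == p)%:R.
  move=> Ps sp; rewrite -mulr_sumr -sum_mobius_interval //; congr (_ * _).
  by apply: eq_bigl => r; rewrite Ps /= andbAC -andbA.
rewrite (bigD1 p) /=; last by rewrite Pp refines_refl.
rewrite inner ?refines_refl // eqxx mulr1.
rewrite big1 ?addr0 // => s /andP [/andP [Ps sp] nsp].
by rewrite inner // (negbTE nsp) mulr0.
Qed.

Lemma eq_of_downset_sums (G G' : PT -> C) :
  (forall p, is_part p -> \sum_(s : PT | is_part s && refines s p) G s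
                        = \sum_(s : PT | is_part s && refines s p) G' s) ->
  forall p, is_part p -> G p = G' p.
Proof.
move=> eq_sums p; have [k] := ubnP #|downset p|; elim: k p => [//|k IH] p lt_pk Pp.
have pp : is_part p && refines p p by rewrite Pp refines_refl.
have := eq_sums p Pp; rewrite (bigD1 p pp) [in RHS](bigD1 p pp) (eq_bigr G') => [/addIr //|].
move=> s /andP [/andP [Ps sp] nsp]; apply: IH => //.
by rewrite -ltnS (leq_trans _ lt_pk) // ltnS card_downset_lt.
Qed.

Lemma mobius_inversion (F G : PT -> C) :
  (forall p, is_part p -> \sum_(s : PT | is_part s && refines s p) G s = F p) ->
  forall p, is_part p -> G p = \sum_(s : PT | is_part s && refines s p) F s * mobius C s p.
Proof.
move=> sumG; apply: eq_of_downset_sums => p Pp.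
by rewrite sumG // sum_mobius_transform.
Qed.

End Mobius.
End PartitionLattice.

Definition swapn (a b x : nat) : nat := if x == a then b else if x == b then a else x.

Lemma swapnK a b : involutive (swapn a b).
Proof.
move=> x; rewrite /swapn; have [->|xa] := eqVneq x a.
  by have [->|ba] := eqVneq b a; rewrite ?eqxx // eq_sym (negbTE ba) eqxx.
have [->|xb] := eqVneq x b; first by rewrite eqxx.
by rewrite (negbTE xa) (negbTE xb).
Qed.

Lemma bij_of_eq_kernel (T : eqType) (f g : T -> nat) (r : seq T) :
  {in r &, forall x y, (f x == f y) = (g x == g y)} ->
  exists2 s : nat -> nat, bijective s & {in r, forall x, s (f x) = g x}.
Proof.
elim: r => [|a r IH] fg; first by exists id => //; exists id.
have [|s bij_s sfg] := IH; first by move=> x y xr yr; apply: fg; rewrite inE ?xr ?yr orbT.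
have ar : a \in a :: r by rewrite mem_head.
have [/hasP [y yr /eqP fya]|/hasPn fa_new] := boolP (has (fun y => f y == f a) r).
  exists s => // x; rewrite inE => /predU1P [->|]; last exact: sfg.
  by rewrite -fya sfg //; apply/eqP; rewrite -fg ?fya // inE yr orbT.
exists (swapn (s (f a)) (g a) \o s).
  by apply: bij_comp => //; exists (swapn (s (f a)) (g a)); apply: swapnK.
move=> x; rewrite inE => /predU1P [->|xr] /=; first by rewrite /swapn eqxx.
have fxa : f x != f a by apply: fa_new.
have gxa : g x != g a by rewrite -fg // inE xr orbT.
have sfxa : g x != s (f a).
  by rewrite -sfg //; apply: contra fxa => /eqP /(bij_inj bij_s) ->.
by rewrite (sfg x xr) /swapn (negbTE sfxa) (negbTE gxa).
Qed.

Lemma exphi_prod_kernel (C : fieldType) (A : algType C) (phi : A -> C) (E : exch_system phi)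
    n (X : 'I_n -> A) (f g : 'I_n -> nat) :
  (forall j j', (f j == f j') = (g j == g j')) ->
  exphi (\prod_(j < n) exiota E (f j) (X j)) = exphi (\prod_(j < n) exiota E (g j) (X j)).
Proof.
move=> fg; have [s bij_s sfg] := @bij_of_eq_kernel _ f g (enum 'I_n) (fun x y _ _ => fg x y).
by rewrite (exch_inv E X f bij_s); congr exphi; apply: eq_bigr => j _; rewrite sfg ?mem_enum.
Qed.

Section PreimagePartition.
Variables (N m : nat) (f : 'I_N -> 'I_m).
Hypothesis f_surj : forall i, exists k, f k = i.

Definition preim_part (s : {set {set 'I_m}}) : {set {set 'I_N}} :=
  [set f @^-1: B | B : {set 'I_m} in s].

Lemma eq_preimset (B1 B2 : {set 'I_m}) : (f @^-1: B1 == f @^-1: B2) = (B1 == B2).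
Proof.
apply/eqP/eqP => [eqB|-> //]; apply/setP => i; have [k <-] := f_surj i.
by have /setP /(_ k) := eqB; rewrite !inE.
Qed.

Lemma preim_part_is_part (s : {set {set 'I_m}}) : is_part s -> is_part (preim_part s).
Proof.
move=> Ps; apply/and3P; split.
- rewrite eqEsubset subsetT; apply/subsetP => k _; apply/bigcupP.
  exists (f @^-1: pblock s (f k)); last by rewrite inE pblock_refl.
  by rewrite imset_f // pblock_mem ?is_part_cover.
- apply/trivIsetP => _ _ /imsetP [B1 HB1 ->] /imsetP [B2 HB2 ->] ne.
  have ne12 : B1 != B2 by apply: contra ne => /eqP ->.
  have dis := trivIsetP (is_part_trivIset Ps) _ _ HB1 HB2 ne12.
  by apply/pred0P => k /=; rewrite !inE; apply/negbTE/andP => [[/(disjointFr dis) ->]].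
- apply/imsetP => [[B HB eqB]].
  have /set0Pn [i iB] : B != set0 by apply: (partition_neq0 Ps).
  have [k fk] := f_surj i.
  by have := in_set0 k; rewrite eqB inE fk iB.
Qed.

Lemma pblock_preim_part (s : {set {set 'I_m}}) k : is_part s ->
  pblock (preim_part s) k = f @^-1: pblock s (f k).
Proof.
move=> Ps; apply: def_pblock; first exact/is_part_trivIset/preim_part_is_part.
  by rewrite imset_f // pblock_mem ?is_part_cover.
by rewrite inE pblock_refl.
Qed.

Lemma refines_preim_part (s s' : {set {set 'I_m}}) : is_part s -> is_part s' ->
  refines (preim_part s) (preim_part s') = refines s s'.
Proof.
move=> Ps Ps'; have Pfs := preim_part_is_part Ps; have Pfs' := preim_part_is_part Ps'.
apply/(refinesP Pfs Pfs')/(refinesP Ps Ps') => ss' => [i i'|k k'].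
  have [k <-] := f_surj i; have [k' <-] := f_surj i'.
  by have := ss' k k'; rewrite !pblock_preim_part // !inE.
by rewrite !pblock_preim_part // !inE; apply: ss'.
Qed.

Lemma refines_kernel_part (d : {set {set 'I_N}}) : is_part d ->
  refines (preim_part (zero_part m)) d -> forall k k', f k' = f k -> k' \in pblock d k.
Proof.
move=> Pd /(refinesP (preim_part_is_part (zero_part_is_part m)) Pd) kd k k' fkk'.
by apply: kd; rewrite pblock_preim_part ?zero_part_is_part // inE pblock_zero_part inE fkk'.
Qed.

Definition push_rel (r : {set {set 'I_N}}) : rel 'I_m :=
  fun i i' => [exists k, exists k', [&& k' \in pblock r k, f k == i & f k' == i']].

Definition push_part (r : {set {set 'I_N}}) : {set {set 'I_m}} :=
  equivalence_partition (connect (push_rel r)) [set: 'I_m].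

Lemma push_rel_sym r : is_part r -> symmetric (push_rel r).
Proof.
move=> Pr i i'; apply/existsP/existsP => [] [k /existsP [k' /and3P [kk' fk fk']]];
  by exists k'; apply/existsP; exists k; rewrite fk fk' pblock_sym.
Qed.

Lemma push_rel_equiv r : is_part r ->
  {in [set: 'I_m] & &, equivalence_rel (connect (push_rel r))}.
Proof.
move=> Pr x y z _ _ _; split; first exact: connect0.
by move=> cxy; rewrite (same_connect (sym_connect_sym (push_rel_sym Pr)) cxy).
Qed.

Lemma push_part_is_part r : is_part r -> is_part (push_part r).
Proof. by move=> Pr; apply/equivalence_partitionP/push_rel_equiv. Qed.

Lemma pblock_push_part r i i' : is_part r ->
  (i' \in pblock (push_part r) i) = connect (push_rel r) i i'.
Proof. by move=> Pr; rewrite pblock_equivalence_partition ?inE //; apply: push_rel_equiv. Qed.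

Lemma refines_push_part (r : {set {set 'I_N}}) (s : {set {set 'I_m}}) :
  is_part r -> is_part s -> refines (push_part r) s = refines r (preim_part s).
Proof.
move=> Pr Ps; have Pfs := preim_part_is_part Ps.
apply/(refinesP (push_part_is_part Pr) Ps)/(refinesP Pr Pfs) => rs.
  move=> k k' kk'; rewrite pblock_preim_part // inE; apply: rs; rewrite pblock_push_part //.
  by apply: connect1; apply/existsP; exists k; apply/existsP; exists k'; rewrite kk' !eqxx.
move=> i i'; rewrite pblock_push_part //.
have s_closed : closed (push_rel r) (pblock s i).
  apply: (intro_closed (sym_connect_sym (push_rel_sym Pr))).
  move=> x y /existsP [k /existsP [k' /and3P [kk' /eqP fk /eqP fk']]] xi.
  have := rs _ _ kk'; rewrite pblock_preim_part // inE fk fk' => yx.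
  exact: pblock_trans Ps xi yx.
by move/(closed_connect s_closed) <-; apply: pblock_refl.
Qed.

Lemma preim_push_refines (d : {set {set 'I_N}}) : is_part d ->
  refines (preim_part (zero_part m)) d -> refines (preim_part (push_part d)) d.
Proof.
move=> Pd /(refines_kernel_part Pd) kd.
apply/(refinesP (preim_part_is_part (push_part_is_part Pd)) Pd) => k k'.
rewrite pblock_preim_part ?push_part_is_part // inE pblock_push_part //.
pose a := [set i | [exists k2, (k2 \in pblock d k) && (f k2 == i)]].
have a_closed : closed (push_rel d) a.
  apply: (intro_closed (sym_connect_sym (push_rel_sym Pd))).
  move=> x y /existsP [k1 /existsP [k2 /and3P [k12 /eqP <- /eqP <-]]].
  rewrite !inE => /existsP [k3 /andP [k3k /eqP f31]].
  apply/existsP; exists k2; rewrite eqxx andbT.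
  exact: pblock_trans Pd k3k (pblock_trans Pd (kd _ _ (esym f31)) k12).
have fk_a : f k \in a by rewrite inE; apply/existsP; exists k; rewrite pblock_refl ?eqxx.
move/(closed_connect a_closed); rewrite fk_a inE => /esym/existsP [k3 /andP [k3k /eqP fk3]].
exact: pblock_trans Pd k3k (kd _ _ (esym fk3)).
Qed.

Lemma is_join_preim_part (r : {set {set 'I_N}}) (p : {set {set 'I_m}}) :
  is_part r -> is_part p ->
  is_join r (preim_part (zero_part m)) (preim_part p) = (push_part r == p).
Proof.
move=> Pr Pp; have Pq := push_part_is_part Pr; have P0 := zero_part_is_part m.
apply/and4P/eqP => [[_ rp _ /forallP join_r]|<-].
  rewrite -refines_push_part // in rp; apply: refines_antisym rp _ => //.
  have := join_r (preim_part (push_part r)).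
  rewrite preim_part_is_part // -refines_push_part // refines_refl.
  by rewrite !refines_preim_part // zero_part_refines //; apply.
split; first exact: preim_part_is_part.
- by rewrite -refines_push_part // refines_refl.
- by rewrite refines_preim_part // zero_part_refines.
apply/forallP => d; apply/implyP => Pd; apply/implyP => rd; apply/implyP => kd.
have Pqd := push_part_is_part Pd.
apply: refines_trans (preim_push_refines Pd kd).
rewrite refines_preim_part // refines_push_part //; apply: refines_trans rd _.
by rewrite -refines_push_part // refines_refl.
Qed.

End PreimagePartition.

Lemma big_enumT (R : Type) (idx : R) (op : R -> R -> R) (T : finType) (F : T -> R) :
  \big[op/idx]_(i <- enum T) F i = \big[op/idx]_(i : T) F i.
Proof. by rewrite enumT unlock. Qed.

Section Flattening.
Variables (m : nat) (n_ : 'I_m -> nat).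
Local Notation N := (\sum_(i < m) n_ i).

Lemma size_owners : size (owners n_) = N.
Proof.
rewrite /owners size_flatten /shape -map_comp sumnE big_map big_enumT.
by apply: eq_bigr => i _; rewrite /= size_nseq.
Qed.

Lemma owner_lt (k : 'I_N) : (nth 0%N (owners n_) k < m)%N.
Proof.
have : nth 0%N (owners n_) k \in owners n_ by rewrite mem_nth // size_owners.
case/flattenP => s /mapP [i _ ->]; rewrite mem_nseq => /andP [_ /eqP ->].
exact: ltn_ord.
Qed.

Definition owner (k : 'I_N) : 'I_m := Ordinal (owner_lt k).

Lemma owner_surj : (forall i, 0 < n_ i)%N -> forall i, exists k, owner k = i.
Proof.
move=> n_gt0 i; have i_owner : val i \in owners n_.
  apply/flattenP; exists (nseq (n_ i) (val i)); last by rewrite mem_nseq n_gt0 eqxx.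
  by apply/mapP; exists i; rewrite ?mem_enum.
have lt_iN : (index (val i) (owners n_) < N)%N by rewrite -size_owners index_mem.
by exists (Ordinal lt_iN); apply: val_inj; rewrite /= nth_index.
Qed.

Lemma tilde_preim (s : {set {set 'I_m}}) : tilde n_ s = preim_part owner s.
Proof.
apply: eq_imset => B; apply/setP => k; rewrite !inE.
apply/existsP/idP => [[i /andP [iB /eqP ki]]|kB]; last by exists (owner k); rewrite kB eqxx.
by rewrite (_ : owner k = i) //; apply: val_inj.
Qed.

Lemma big_flatX (T : zmodType) (X : forall i, 'I_(n_ i) -> T)
    (R : Type) (idx : R) (op : Monoid.law idx) (F : 'I_m -> T -> R) :
  \big[op/idx]_(k < N) F (owner k) (flatX X k)
  = \big[op/idx]_(i < m) \big[op/idx]_(j < n_ i) F i (X i j).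
Proof.
pose tagged := flatten [seq [seq (val i, X i j) | j <- enum 'I_(n_ i)] | i <- enum 'I_m].
(* The tags are values of ordinals, so the default [idx] of [G] is never used. *)
pose G (p : nat * T) := if insub p.1 is Some i then F i p.2 else idx.
have tagged_fst : map fst tagged = owners n_.
  rewrite map_flatten -map_comp; congr flatten; apply: eq_map => i /=.
  by rewrite -map_comp -[in RHS](size_enum_ord (n_ i)); elim: (enum _) => //= j s ->.
have tagged_snd : map snd tagged = flatten [seq [seq X i j | j <- enum 'I_(n_ i)] | i <- enum 'I_m].
  by rewrite map_flatten -map_comp; congr flatten; apply: eq_map => i /=; rewrite -map_comp.
have size_tagged : size tagged = N by rewrite -(size_map fst) tagged_fst size_owners.
transitivity (\big[op/idx]_(p <- tagged) G p).
  rewrite (big_nth (0%N, 0)) size_tagged big_mkord; apply: eq_bigr => k _.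
  have tag_k : (nth (0%N, 0) tagged k).1 = val (owner k).
    by rewrite -(nth_map _ 0%N) ?size_tagged // tagged_fst.
  by rewrite /G /flatX -tagged_snd (nth_map (0%N, 0)) ?size_tagged // tag_k valK.
rewrite big_flatten big_map big_enumT; apply: eq_bigr => i _.
by rewrite big_map big_enumT; apply: eq_bigr => j _; rewrite /G /= valK.
Qed.

End Flattening.

Arguments owner {m} n_ k.

Section Cumulants.
Variables (C : fieldType) (A : algType C) (phi : A -> C) (E : exch_system phi).
Variables (m : nat) (n_ : 'I_m -> nat) (X : forall i : 'I_m, 'I_(n_ i) -> A).
Arguments X : clear implicits.
Hypothesis n_gt0 : forall i, (0 < n_ i)%N.
Local Notation N := (\sum_(i < m) n_ i).
Local Notation prodX := (fun i => \prod_(j < n_ i) X i j).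

Lemma phi_part_tilde (s : {set {set 'I_m}}) : is_part s ->
  phi_part E (tilde n_ s) (flatX X) = phi_part E s prodX.
Proof.
move=> Ps; have owner_onto := owner_surj n_gt0.
rewrite /phi_part tilde_preim.
rewrite (@exphi_prod_kernel _ _ _ E _ _ _ (fun k => pickle (pblock s (owner n_ k)))); last first.
  move=> k k'; rewrite !pblock_preim_part // !(inj_eq (pcan_inj pickleK_inv)).
  exact: eq_preimset.
rewrite (big_flatX X _ (fun i => exiota E (pickle (pblock s i)))).
by congr exphi; apply: eq_bigr => i _; rewrite rmorph_prod.
Qed.

Lemma sum_Kpart_push (p : {set {set 'I_m}}) : is_part p ->
  \sum_(s : {set {set 'I_m}} | is_part s && refines s p)
     \sum_(r : {set {set 'I_N}} | is_part r && (push_part (owner n_) r == s)) Kpart E r (flatX X)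
  = phi_part E p prodX.
Proof.
move=> Pp; have owner_onto := owner_surj n_gt0.
rewrite (exchange_big_dep (fun r => is_part r && refines (push_part (owner n_) r) p)) /=;
  last by move=> s r /andP [_ sp] /andP [Pr /eqP ->]; rewrite Pr.
rewrite (eq_bigr (fun r => Kpart E r (flatX X))); last first.
  move=> r /andP [Pr rp]; rewrite (big_pred1 (push_part (owner n_) r)) // => s.
  by rewrite eq_sym andbC Pr /=; case: eqP => // ->; rewrite push_part_is_part.
rewrite (eq_bigl (fun r => is_part r && refines r (preim_part (owner n_) p))); last first.
  by move=> r; case Pr: (is_part r); rewrite //= refines_push_part.
by rewrite (sum_mobius_transform (fun s => phi_part E s (flatX X))) ?preim_part_is_part
  // -tilde_preim phi_part_tilde.
Qed.

End Cumulants.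

Theorem proposition3p4 (R : realType) (A : algType R[i]) (phi : A -> R[i])
  (E : exch_system phi) (m : nat) (n_ : 'I_m -> nat)
  (X : forall i : 'I_m, 'I_(n_ i) -> A) (pi : {set {set 'I_m}}) :
  (forall i, (0 < n_ i)%N) ->
  partition pi [set: 'I_m] ->
  Kpart E pi (fun i => \prod_(j < n_ i) X i j)
  = \sum_(s : {set {set 'I_(\sum_(i < m) n_ i)}} |
            is_part s && is_join s (tilde n_ (zero_part m)) (tilde n_ pi))
      Kpart E s (flatX X).
Proof.
move=> n_gt0 Ppi.
rewrite (eq_bigl (fun r => is_part r && (push_part (owner n_) r == pi))); last first.
  move=> r; case Pr: (is_part r) => //=.
  by rewrite !tilde_preim is_join_preim_part //; apply: owner_surj.
exact/esym/(mobius_inversion (sum_Kpart_push E X n_gt0)).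
Qed.
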